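(* Let $m\ge1$, $0\le q\le n$, $p\ge0$ and $1\le k\le n-q$. For $1\le i\le m$ and $1\le j\le n$, $L_{i,2j-1+m}f_{k,p,q}=2k\left(\frac M2+p+q+k-1\right)f_{k-1,p+1,q+1}\,x_i\,\grave{x}_{2j-1}$, where $M=m-2n$.
   Context: On $\mathbb{R}^{m|2n}$ with even $x_1..x_m$ and odd $\grave{x}_1..\grave{x}_{2n}$: $r^2=\sum x_i^2$, $\theta^2=-\sum_{l=1}^n\grave{x}_{2l-1}\grave{x}_{2l}$. The operator is $L_{i,2j-1+m}=2x_i\partial_{\grave{x}_{2j}}-\grave{x}_{2j-1}\partial_{x_i}$. For $0\le k\le n-q$, $f_{k,p,q}=\sum_{s=0}^ka_sr^{2k-2s}\theta^{2s}$ with $a_s=\binom ks\frac{(n-q-s)!}{\Gamma(\frac m2+p+k-s)}\frac{\Gamma(\frac m2+p+k)}{(n-q-k)!}$. *)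

(* Superpolynomials on R^{m|N} (N = 2n odd generators),
   represented by their coefficient functions on monomials
   x^alpha * grave_x_S, where grave_x_S is the product of the odd
   generators with indices in S taken in increasing order. *)
From HB Require Import structures.
From mathcomp Require Import all_boot all_order all_algebra.
Set Implicit Arguments. Unset Strict Implicit. Unset Printing Implicit Defensive.
Import Order.TTheory GRing.Theory Num.Theory.
Local Open Scope ring_scope.

Definition SP (R : Type) (m N : nat) := {ffun 'I_m -> nat} -> {set 'I_N} -> R.

Section Ops.
Variables (R : realFieldType) (m N : nat).
Local Notation SP := (SP R m N).

Definition sp1 : SP := fun a S => if (a == [ffun=> 0%N]) && (S == set0) then 1 else 0.

Definition exp_dec (i : 'I_m) (a : {ffun 'I_m -> nat}) : {ffun 'I_m -> nat} :=
  [ffun j => if j == i then (a j).-1 else a j].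
Definition exp_inc (i : 'I_m) (a : {ffun 'I_m -> nat}) : {ffun 'I_m -> nat} :=
  [ffun j => if j == i then (a j).+1 else a j].

Definition mulx (i : 'I_m) (f : SP) : SP :=
  fun a S => if (0 < a i)%N then f (exp_dec i a) S else 0.
Definition dx (i : 'I_m) (f : SP) : SP :=
  fun a S => (a i).+1%:R * f (exp_inc i a) S.

Definition sgn_below (b : 'I_N) (S : {set 'I_N}) : R :=
  (-1) ^+ #|[set t in S | (t < b)%N]|.
Definition sgn_above (b : 'I_N) (S : {set 'I_N}) : R :=
  (-1) ^+ #|[set t in S | (b < t)%N]|.

(* left multiplication by the odd variable grave_x_b *)
Definition mulo (b : 'I_N) (f : SP) : SP :=
  fun a S => if b \in S then sgn_below b S * f a (S :\ b) else 0.
(* right multiplication by the odd variable grave_x_b *)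
Definition mulo_r (b : 'I_N) (f : SP) : SP :=
  fun a S => if b \in S then sgn_above b S * f a (S :\ b) else 0.
(* (left) odd partial derivative d/d grave_x_b *)
Definition dodd (b : 'I_N) (f : SP) : SP :=
  fun a S => if b \in S then 0 else sgn_below b S * f a (b |: S).
End Ops.

Lemma oddidx_proof (n : nat) (j : 'I_n) (b : bool) : (2 * j + b < 2 * n)%N.
Proof.
have h := ltn_ord j.
apply: (@leq_trans (2 * j + 2)%N); first by case: b; rewrite ltn_add2l.
by rewrite -[(2 * j + 2)%N]/(2 * j + 2 * 1)%N -mulnDr addn1 leq_mul2l h orbT.
Qed.

(* 0-based index of grave_x_{2j-1} (b = false) or grave_x_{2j} (b = true),
   for the 1-based j = val j + 1 *)
Definition oi (n : nat) (j : 'I_n) (b : bool) : 'I_(2 * n) :=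
  Ordinal (oddidx_proof j b).

Section Fkpq.
Variables (R : realFieldType) (m n : nat).
Local Notation SP := (SP R m (2 * n)).

Definition mul_r2 (f : SP) : SP := fun a S => \sum_(i < m) mulx i (mulx i f) a S.
Definition mul_theta2 (f : SP) : SP :=
  fun a S => - \sum_(l < n) mulo (oi l false) (mulo (oi l true) f) a S.

(* a_s = C(k,s) (n-q-s)!/(n-q-k)! * Gamma(m/2+p+k)/Gamma(m/2+p+k-s),
   the Gamma ratio written out as prod_{t<s} (m/2+p+k-1-t) *)
Definition a_coef (k p q s : nat) : R :=
  'C(k, s)%:R * (((n - q - s)`!)%:R / ((n - q - k)`!)%:R) *
  \prod_(t < s) ((m%:R / 2) + p%:R + k%:R - 1 - t%:R).

Definition fkpq (k p q : nat) : SP :=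
  fun a S => \sum_(s < k.+1)
    a_coef k p q s * iter (k - s) mul_r2 (iter s mul_theta2 (@sp1 R m (2 * n))) a S.

Definition Lop (i : 'I_m) (j : 'I_n) (f : SP) : SP :=
  fun a S => 2 * mulx i (dodd (oi j true) f) a S - mulo (oi j false) (dx i f) a S.
End Fkpq.

(* Every elementary operator in play (left multiplication
   by x_i or by grave_x_b, right multiplication by grave_x_b, and the
   derivatives d/dx_i, d/d grave_x_b) is a weighted shift of coefficients, hence
   commutes with finite linear combinations.  From the (anti)commutation
   relations between these operators we get, for the building blocks
   g_{a,s} = r^{2a} theta^{2s},
     d/dx_i g_{a,s} = 2a x_i g_{a-1,s},  d/d grave_x_{2j} g_{a,s} = s grave_x_{2j-1} g_{a,s-1},
   hence  L g_{a,s} = 2s grave_x_{2j-1} x_i g_{a,s-1} - 2a grave_x_{2j-1} x_i g_{a-1,s}.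
   Writing f_{k,p,q} = sum_s a_s g_{k-s,s} and reindexing, the coefficient of
   grave_x_{2j-1} x_i g_{k-1-t,t} is 2(t+1) a_{t+1} - 2(k-t) a_t, which equals
   2k (M/2+p+q+k-1) times the coefficient of f_{k-1,p+1,q+1}.  Finally the
   g_{a,s} only involve even monomials in the odd variables, on which left and
   right multiplication by grave_x_{2j-1} coincide. *)
From HB Require Import structures.
From mathcomp Require Import all_boot all_order all_algebra.
From mathcomp Require Import ring zify.
From Stdlib Require Import FunctionalExtensionality.
Set Implicit Arguments. Unset Strict Implicit. Unset Printing Implicit Defensive.
Import Order.TTheory GRing.Theory Num.Theory.
Local Open Scope ring_scope.

Lemma sum_delta (R : pzSemiRingType) (I : finType) (i : I) (F : I -> R) :
  \sum_(i' : I) (i == i')%:R * F i' = F i.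
Proof.
rewrite (bigD1 i) //= eqxx mul1r big1 ?addr0 // => i' ne.
by rewrite eq_sym (negbTE ne) mul0r.
Qed.

Section Superpolynomials.
Variables (R : realFieldType) (m N : nat).
Local Notation SP := (SP R m N).

Lemma sp_ext (f g : SP) : (forall a S, f a S = g a S) -> f = g.
Proof. by move=> h; do 2 (apply: functional_extensionality => ?); apply: h. Qed.

Definition sp_linear (Op : SP -> SP) := forall (I : finType) (c : I -> R) (F : I -> SP),
  Op (fun a S => \sum_i c i * F i a S) = fun a S => \sum_i c i * Op (F i) a S.

Lemma weighted_shift_linear (Op : SP -> SP)
    (P : {ffun 'I_m -> nat} -> {set 'I_N} -> bool)
    (w : {ffun 'I_m -> nat} -> {set 'I_N} -> R) shift_a shift_S :
  (forall f a S, Op f a S = if P a S then w a S * f (shift_a a S) (shift_S a S) else 0) ->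
  sp_linear Op.
Proof.
move=> OpE I c F; apply: sp_ext => a S; rewrite OpE.
case hP: (P a S); last by rewrite big1 // => i _; rewrite OpE hP mulr0.
by rewrite mulr_sumr; apply: eq_bigr => i _; rewrite OpE hP mulrCA.
Qed.

Lemma iter_linear (Op : SP -> SP) (e : nat) :
  sp_linear Op -> sp_linear (fun f => iter e Op f).
Proof. by move=> Op_lin I c F; elim: e => //= e ->; apply: Op_lin. Qed.

Lemma iter_commute (Op1 Op2 : SP -> SP) (e : nat) (f : SP) :
  (forall g, Op1 (Op2 g) = Op2 (Op1 g)) -> Op1 (iter e Op2 f) = iter e Op2 (Op1 f).
Proof. by move=> comm; elim: e => //= e IH; rewrite comm IH. Qed.

Section LinearOperator.
Variable Op : SP -> SP.
Hypothesis Op_lin : sp_linear Op.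

Lemma lin_comb (I : finType) (c : I -> R) (F : I -> SP) (G H : SP) :
  (forall a S, G a S = \sum_i c i * F i a S) ->
  (forall a S, H a S = \sum_i c i * Op (F i) a S) -> Op G = H.
Proof.
move=> GE HE; rewrite (sp_ext GE) Op_lin; apply: sp_ext => a S; by rewrite HE.
Qed.

Lemma lin_scale (x : R) (F : SP) : Op (fun a S => x * F a S) = fun a S => x * Op F a S.
Proof. by apply: (lin_comb (c := fun _ : 'I_1 => x) (F := fun _ => F)) => a S; rewrite big_ord1. Qed.

Lemma lin_add (F G : SP) : Op (fun a S => F a S + G a S) = fun a S => Op F a S + Op G a S.
Proof.
by apply: (lin_comb (c := fun _ => 1) (F := fun b : bool => if b then F else G)) => a S;
  rewrite big_bool /= !mul1r.
Qed.

Lemma lin_sub (F G : SP) : Op (fun a S => F a S - G a S) = fun a S => Op F a S - Op G a S.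
Proof.
by apply: (lin_comb (c := fun b : bool => if b then 1 else -1)
    (F := fun b => if b then F else G))
  => a S; rewrite big_bool /= mul1r mulN1r.
Qed.

Lemma lin_opp (F : SP) : Op (fun a S => - F a S) = fun a S => - Op F a S.
Proof. by apply: (lin_comb (c := fun _ : 'I_1 => -1) (F := fun _ => F)) => a S; rewrite big_ord1 mulN1r. Qed.

Lemma lin_sum1 (I : finType) (F : I -> SP) :
  Op (fun a S => \sum_i F i a S) = fun a S => \sum_i Op (F i) a S.
Proof. by apply: (lin_comb (c := fun _ => 1) (F := F)) => a S; apply: eq_bigr => i _; rewrite mul1r. Qed.

Lemma lin_zero : Op (fun _ _ => 0) = fun _ _ => 0.
Proof. by apply: (lin_comb (c := fun _ : 'I_0 => 0) (F := fun _ _ _ => 0)) => a S; rewrite big_ord0. Qed.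
End LinearOperator.

Lemma mulx_lin i : sp_linear (mulx i).
Proof.
by apply: (@weighted_shift_linear _ (fun a _ => 0 < a i)%N (fun _ _ => 1)
  (fun a _ => exp_dec i a) (fun _ S => S)) => f a S; rewrite /mulx mul1r.
Qed.

Lemma dx_lin i : sp_linear (dx i).
Proof.
exact: (@weighted_shift_linear _ (fun _ _ => true) (fun a _ => (a i).+1%:R)
  (fun a _ => exp_inc i a) (fun _ S => S)).
Qed.

Lemma mulo_lin b : sp_linear (mulo b).
Proof.
exact: (@weighted_shift_linear _ (fun _ S => b \in S) (fun _ S => sgn_below R b S)
  (fun a _ => a) (fun _ S => S :\ b)).
Qed.

Lemma dodd_lin b : sp_linear (dodd b).
Proof.
by apply: (@weighted_shift_linear _ (fun _ S => b \notin S) (fun _ S => sgn_below R b S)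
  (fun a _ => a) (fun _ S => b |: S)) => f a S; rewrite /dodd; case: ifP.
Qed.

Lemma mulxC i i' (f : SP) : mulx i (mulx i' f) = mulx i' (mulx i f).
Proof.
apply: sp_ext => a S; rewrite /mulx.
case: (eqVneq i i') => [->//|ne].
rewrite !ffunE (negbTE ne) eq_sym (negbTE ne).
have -> : exp_dec i' (exp_dec i a) = exp_dec i (exp_dec i' a).
  by apply/ffunP => t; rewrite !ffunE; case: (t == i); case: (t == i').
by case: (0 < a i)%N; case: (0 < a i')%N.
Qed.

Lemma dx_mulx i i' (f : SP) :
  dx i (mulx i' f) = fun a S => (i == i')%:R * f a S + mulx i' (dx i f) a S.
Proof.
apply: sp_ext => a S; rewrite /mulx /dx.
case: (eqVneq i i') => [<-|ne].
  rewrite !ffunE eqxx /=.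
  have -> : exp_dec i (exp_inc i a) = a.
    by apply/ffunP => t; rewrite !ffunE; case: (eqVneq t i) => [->|].
  case ha: (a i) => [|k]; first by rewrite /= mul1r addr0.
  have -> : exp_inc i (exp_dec i a) = a.
    by apply/ffunP => t; rewrite !ffunE; case: (eqVneq t i) => [->|//]; rewrite ?eqxx ha.
  rewrite /= -!natr1; ring.
rewrite !ffunE eq_sym (negbTE ne) mul0r add0r.
have -> : exp_dec i' (exp_inc i a) = exp_inc i (exp_dec i' a).
  apply/ffunP => t; rewrite !ffunE.
  by case: (eqVneq t i) => [->|_]; [rewrite (negbTE ne) | case: (t == i')].
by case: (0 < a i')%N; rewrite ?mulr0.
Qed.

Lemma mulx_mulo i b (f : SP) : mulx i (mulo b f) = mulo b (mulx i f).
Proof.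
by apply: sp_ext => a S; rewrite /mulx /mulo; case: (0 < a i)%N; case: (b \in S);
  rewrite ?mulr0.
Qed.

Lemma dx_mulo i b (f : SP) : dx i (mulo b f) = mulo b (dx i f).
Proof. by apply: sp_ext => a S; rewrite /dx /mulo; case: (b \in S); rewrite ?mulr0 // mulrCA. Qed.

Lemma dodd_mulx i b (f : SP) : dodd b (mulx i f) = mulx i (dodd b f).
Proof.
by apply: sp_ext => a S; rewrite /mulx /dodd; case: (0 < a i)%N; case: (b \in S);
  rewrite ?mulr0.
Qed.

Lemma dx_sp1 i : dx i (@sp1 R m N) = fun _ _ => 0.
Proof.
apply: sp_ext => a S; rewrite /dx /sp1.
case: eqP => [/ffunP/(_ i)|]; last by rewrite mulr0.
by rewrite !ffunE eqxx.
Qed.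

Lemma dodd_sp1 b : dodd b (@sp1 R m N) = fun _ _ => 0.
Proof.
apply: sp_ext => a S; rewrite /dodd /sp1; case: ifP => // _.
case: (_ == _) => /=; last by rewrite mulr0.
case: eqP => [/setP/(_ b)|]; last by rewrite mulr0.
by rewrite !inE eqxx.
Qed.

Lemma sgn_below_D1 (b c : 'I_N) (S : {set 'I_N}) :
  sgn_below R c (S :\ b) = (if (b \in S) && (b < c)%N then -1 else 1) * sgn_below R c S.
Proof.
rewrite /sgn_below.
have -> : [set t in S :\ b | (t < c)%N] = [set t in S | (t < c)%N] :\ b.
  by apply/setP => t; rewrite !inE andbA.
rewrite [in RHS](cardsD1 b [set t in S | (t < c)%N]) exprD inE.
by case: (_ && _); rewrite ?expr1 ?expr0 ?mulN1r ?mul1r ?opprK.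
Qed.

Lemma sgn_below_U1 (b c : 'I_N) (S : {set 'I_N}) : b \notin S ->
  sgn_below R c (b |: S) = (if (b < c)%N then -1 else 1) * sgn_below R c S.
Proof.
move=> bS; rewrite -[in RHS](setU1K bS) sgn_below_D1 setU11 /=.
by case: (b < c)%N; rewrite ?mulrA ?mulrNN ?mul1r.
Qed.

Lemma sgn_below_sq (c : 'I_N) (S : {set 'I_N}) : sgn_below R c S * sgn_below R c S = 1.
Proof. by rewrite /sgn_below -exprMn mulrNN mulr1 expr1n. Qed.

Lemma mulo_anti b c (f : SP) : mulo b (mulo c f) = fun a S => - mulo c (mulo b f) a S.
Proof.
apply: sp_ext => a S; rewrite /mulo !inE.
case: (eqVneq b c) => [->|ne] /=; first by case: (c \in S); rewrite ?mulr0 ?oppr0.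
case bS: (b \in S); case cS: (c \in S); rewrite ?mulr0 ?oppr0 //.
rewrite setDDl setUC -setDDl !sgn_below_D1 bS cS /=.
by case: (ltngtP b c) => [_|_|/val_inj eq]; [ring | ring | rewrite eq eqxx in ne].
Qed.

Lemma dodd_mulo b c (f : SP) :
  dodd b (mulo c f) = fun a S => (b == c)%:R * f a S - mulo c (dodd b f) a S.
Proof.
apply: sp_ext => a S; rewrite /mulo /dodd !inE.
case: (eqVneq b c) => [<-|ne] /=.
  case bS: (b \in S).
    by rewrite setD1K // sgn_below_D1 ltnn andbF mul1r mulrA sgn_below_sq mul1r subrr.
  by rewrite setU1K ?bS // sgn_below_U1 ?bS // ltnn mul1r mulrA sgn_below_sq subr0.
case bS: (b \in S); case cS: (c \in S); rewrite ?mulr0 ?mul0r ?subrr ?sub0r ?oppr0 //.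
have -> : b |: S :\ c = (b |: S) :\ c.
  by apply/setP => t; rewrite !inE; case: (eqVneq t b) => [->|//]; rewrite ne.
rewrite sgn_below_U1 ?bS // sgn_below_D1 cS /=.
by case: (ltngtP b c) => [_|_|/val_inj eq]; [ring | ring | rewrite eq eqxx in ne].
Qed.

Definition sp_even (f : SP) := forall a (S : {set 'I_N}), odd #|S| -> f a S = 0.

Lemma even_sp1 : sp_even (@sp1 R m N).
Proof.
move=> a S oS; rewrite /sp1; case: (S =P set0) => [e|]; last by rewrite andbF.
by rewrite e cards0 in oS.
Qed.

Lemma even_mulx i f : sp_even f -> sp_even (mulx i f).
Proof. by move=> h a S oS; rewrite /mulx h // if_same. Qed.

Lemma even_mulo2 b c f : sp_even f -> sp_even (mulo b (mulo c f)).
Proof.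
move=> h a S oS; rewrite /mulo.
case bS: (b \in S) => //; case cS: (c \in S :\ b); last by rewrite mulr0.
rewrite h ?mulr0 //.
by move: oS; rewrite (cardsD1 b S) (cardsD1 c (S :\ b)) bS cS !oddD /= negbK.
Qed.

Lemma even_comb (I : finType) (c : I -> R) F : (forall i, sp_even (F i)) ->
  sp_even (fun a S => \sum_i c i * F i a S).
Proof. by move=> h a S oS; rewrite big1 // => i _; rewrite h ?mulr0. Qed.

Lemma card_below_above (b : 'I_N) (S : {set 'I_N}) :
  #|S :\ b| = (#|[set t in S | (t < b)%N]| + #|[set t in S | (b < t)%N]|)%N.
Proof.
rewrite -(cardsID [set t : 'I_N | (t < b)%N] (S :\ b)).
congr addn; apply/eq_card => t; rewrite !inE;
  case: (ltngtP t b) => h; rewrite ?andbT ?andbF //=.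
- by rewrite -val_eqE /= (ltn_eqF h).
- by rewrite -val_eqE /= eq_sym (ltn_eqF h).
- by rewrite -val_eqE /= h eqxx.
Qed.

Lemma mulo_r_even b f : sp_even f -> mulo_r b f = mulo b f.
Proof.
move=> h; apply: sp_ext => a S; rewrite /mulo_r /mulo.
case bS: (b \in S) => //.
case o: (odd #|S :\ b|); first by rewrite h ?mulr0.
move: o; rewrite card_below_above oddD => /negbT; rewrite negb_add => /eqP e.
by rewrite /sgn_above /sgn_below -signr_odd -e signr_odd.
Qed.

End Superpolynomials.

Lemma oi_true_eq n (j l : 'I_n) : (oi j true == oi l true) = (j == l).
Proof. by rewrite -val_eqE /= eqn_add2r eqn_pmul2l. Qed.

Lemma oi_true_false n (j l : 'I_n) : (oi j true == oi l false) = false.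
Proof.
apply/negbTE/eqP => /(congr1 (fun x : 'I_(2 * n) => odd x)) /=.
by rewrite !oddD /= !addbF !addbb.
Qed.

Section RadialAndSymplectic.
Variables (R : realFieldType) (m n : nat).
Local Notation SP := (SP R m (2 * n)).
Local Notation U := (@mul_r2 R m n).
Local Notation T := (@mul_theta2 R m n).
Local Notation one := (@sp1 R m (2 * n)).

Lemma U_lin : sp_linear U.
Proof.
move=> I c F; apply: sp_ext => a S; rewrite /mul_r2.
under eq_bigr do rewrite (mulx_lin _ c F) (mulx_lin _ c).
by rewrite exchange_big /=; apply: eq_bigr => k _; rewrite mulr_sumr.
Qed.

Lemma T_lin : sp_linear T.
Proof.
move=> I c F; apply: sp_ext => a S; rewrite /mul_theta2.
under eq_bigr do rewrite (mulo_lin _ c F) (mulo_lin _ c).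
by rewrite exchange_big /= -sumrN; apply: eq_bigr => k _; rewrite mulrN mulr_sumr.
Qed.

(* r^2 is central and even; theta^2 commutes with the even variables and,
   being a sum of products of two odd variables, with the odd ones too. *)
Lemma mulx_U i (f : SP) : mulx i (U f) = U (mulx i f).
Proof.
apply: sp_ext => a S; rewrite /mul_r2 (lin_sum1 (mulx_lin i)).
by apply: eq_bigr => i' _; rewrite mulxC [mulx i (mulx i' f)]mulxC.
Qed.

Lemma mulo_U b (f : SP) : mulo b (U f) = U (mulo b f).
Proof.
apply: sp_ext => a S; rewrite /mul_r2 (lin_sum1 (mulo_lin b)).
by apply: eq_bigr => i' _; rewrite -!mulx_mulo.
Qed.

Lemma dodd_U b (f : SP) : dodd b (U f) = U (dodd b f).
Proof.
apply: sp_ext => a S; rewrite /mul_r2 (lin_sum1 (dodd_lin b)).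
by apply: eq_bigr => i' _; rewrite !dodd_mulx.
Qed.

Lemma dx_T i (f : SP) : dx i (T f) = T (dx i f).
Proof.
apply: sp_ext => a S; rewrite /mul_theta2 (lin_opp (dx_lin i)) (lin_sum1 (dx_lin i)).
by congr (- _); apply: eq_bigr => l _; rewrite !dx_mulo.
Qed.

Lemma mulo_T b (f : SP) : mulo b (T f) = T (mulo b f).
Proof.
apply: sp_ext => a S; rewrite /mul_theta2 (lin_opp (mulo_lin b)) (lin_sum1 (mulo_lin b)).
congr (- _); apply: eq_bigr => l _.
by rewrite mulo_anti /= [mulo b (mulo _ f)]mulo_anti (lin_opp (mulo_lin _)) opprK.
Qed.

Lemma dx_U i (f : SP) : dx i (U f) = fun a S => 2 * mulx i f a S + U (dx i f) a S.
Proof.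
apply: sp_ext => a S; rewrite /mul_r2 (lin_sum1 (dx_lin i)).
under eq_bigr do rewrite dx_mulx dx_mulx (lin_add (mulx_lin _)) (lin_scale (mulx_lin _)).
by rewrite !big_split /= sum_delta mulr2n mulrDl mul1r addrA.
Qed.

Lemma dodd_T (j : 'I_n) (f : SP) : dodd (oi j true) (T f) =
  fun a S => mulo (oi j false) f a S + T (dodd (oi j true) f) a S.
Proof.
apply: sp_ext => a S; rewrite /mul_theta2 (lin_opp (dodd_lin _)) (lin_sum1 (dodd_lin _)).
under eq_bigr do rewrite dodd_mulo /= oi_true_false mul0r sub0r dodd_mulo oi_true_eq
  (lin_sub (mulo_lin _)) (lin_scale (mulo_lin _)) opprB.
by rewrite sumrB opprB sum_delta.
Qed.

Lemma dx_iterU i a (h : SP) : dx i h = (fun _ _ => 0) ->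
  dx i (iter a U h) = fun A S => (2 * a)%:R * mulx i (iter a.-1 U h) A S.
Proof.
move=> h0; elim: a => [|a IH] /=.
  by rewrite h0; apply: sp_ext => A S; rewrite mul0r.
rewrite dx_U IH (lin_scale U_lin); apply: sp_ext => A S.
case: a {IH} => [|a] /=; first by rewrite mul0r addr0.
rewrite mulx_U !natrM -[a.+2]addn1 -[a.+1]addn1 !natrD; ring.
Qed.

Lemma dodd_iterT (j : 'I_n) s : dodd (oi j true) (iter s T one) =
  fun A S => s%:R * mulo (oi j false) (iter s.-1 T one) A S.
Proof.
elim: s => [|s IH] /=.
  by rewrite dodd_sp1; apply: sp_ext => A S; rewrite mul0r.
rewrite dodd_T IH (lin_scale T_lin); apply: sp_ext => A S.
case: s {IH} => [|s] /=; first by rewrite mul0r addr0 mul1r.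
rewrite mulo_T -[s.+2%:R]natr1; ring.
Qed.

Definition monomial (a s : nat) : SP := iter a U (iter s T one).

Lemma fkpq_monomials k p q :
  fkpq R k p q = fun A S => \sum_(s < k.+1) a_coef R m n k p q s * monomial (k - s) s A S.
Proof. by []. Qed.

(* theta^2 is a sum of products of two odd variables, so r^{2a} theta^{2s}
   is even. *)
Lemma even_monomial a s : sp_even (monomial a s).
Proof.
rewrite /monomial; elim: a => [|a IH] /=.
  elim: s => [|s IH] /=; first exact: even_sp1.
  by move=> A S oS; rewrite /mul_theta2 big1 ?oppr0 // => l _; apply: even_mulo2.
by move=> A S oS; rewrite /mul_r2 big1 // => l _; apply: even_mulx => //; apply: even_mulx.
Qed.

Lemma Lop_lin i j : sp_linear (@Lop R m n i j).
Proof.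
move=> I c F; apply: sp_ext => A S.
rewrite /Lop (dodd_lin _ c F) (mulx_lin _ c) (dx_lin _ c F) (mulo_lin _ c).
by rewrite mulr_sumr -sumrB; apply: eq_bigr => s _; rewrite mulrBr mulrCA.
Qed.

Lemma Lop_monomial i (j : 'I_n) a s A S : Lop i j (monomial a s) A S =
  2 * s%:R * mulo (oi j false) (mulx i (monomial a s.-1)) A S
  - 2 * a%:R * mulo (oi j false) (mulx i (monomial a.-1 s)) A S.
Proof.
have dx_T_one : dx i (iter s T one) = fun _ _ => 0.
  by rewrite (iter_commute _ _ (dx_T i)) dx_sp1 (lin_zero (iter_linear s T_lin)).
rewrite /Lop /monomial (iter_commute _ _ (dodd_U _)) dodd_iterT.
rewrite (lin_scale (iter_linear a U_lin)) (lin_scale (mulx_lin _)).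
rewrite -(iter_commute _ _ (mulo_U _)) mulx_mulo.
rewrite (dx_iterU _ dx_T_one) (lin_scale (mulo_lin _)) natrM; ring.
Qed.

End RadialAndSymplectic.

Lemma a_coef_rec (R : realFieldType) m n K p q t :
  (q <= n)%N -> (K.+1 <= n - q)%N -> (t < K.+1)%N ->
  2 * t.+1%:R * a_coef R m n K.+1 p q t.+1 - 2 * (K.+1 - t)%:R * a_coef R m n K.+1 p q t
  = 2 * K.+1%:R * ((m%:R - 2 * n%:R) / 2 + p%:R + q%:R + K.+1%:R - 1)
    * a_coef R m n K p.+1 q.+1 t.
Proof.
move=> hq hK ht; rewrite /a_coef big_ord_recr /=.
set P := \prod_(i < t) _.
have -> : \prod_(r < t) (m%:R / 2 + p.+1%:R + K%:R - 1 - r%:R) = P :> R.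
  by apply: eq_bigr => r _; rewrite -!natr1; ring.
have -> : (n - q.+1 - t = n - q - t.+1)%N by lia.
have -> : (n - q.+1 - K = n - q - K.+1)%N by lia.
have -> : (n - q - t = (n - q - t.+1).+1)%N by lia.
rewrite factS natrM.
have free_vars : ((n - q - t.+1).+1%:R : R) = n%:R - q%:R - t%:R.
  have e : ((n - q - t.+1).+1 + q + t = n)%N by lia.
  by rewrite -[in RHS]e !natrD; ring.
have bin_up : (t.+1%:R * 'C(K.+1, t.+1)%:R : R) = K.+1%:R * 'C(K, t)%:R.
  by rewrite -!natrM -mul_bin_diag.
have bin_down : ((K.+1 - t)%:R * 'C(K.+1, t)%:R : R) = K.+1%:R * 'C(K, t)%:R.
  by rewrite -!natrM -mul_bin_down.
set F := (n - q - t.+1)`!%:R; set Z := (n - q - K.+1)`!%:R.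
transitivity (2 * (t.+1%:R * 'C(K.+1, t.+1)%:R) * (F / Z) * P
    * (m%:R / 2 + p%:R + K.+1%:R - 1 - t%:R)
  - 2 * ((K.+1 - t)%:R * 'C(K.+1, t)%:R) * (n - q - t.+1).+1%:R * (F / Z) * P).
  by ring.
rewrite bin_up bin_down free_vars -!natr1; field.
by rewrite pnatr_eq0 -lt0n fact_gt0.
Qed.

(* Collecting, in sum_s c_s (2s H_{K+1-s,s-1} - 2(K+1-s) H_{K-s,s}), the
   coefficient of each H_{K-t,t}; the boundary terms s = 0 and s = K+1 have a
   vanishing factor. *)
Lemma sum_lowering_reindex (R : comPzRingType) (K : nat) (c : nat -> R)
    (H : nat -> nat -> R) :
  \sum_(s < K.+2) c s * (2 * s%:R * H (K.+1 - s)%N s.-1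
                         - 2 * (K.+1 - s)%:R * H (K.+1 - s)%N.-1 s)
  = \sum_(t < K.+1) (2 * t.+1%:R * c t.+1 - 2 * (K.+1 - t)%:R * c t) * H (K - t)%N t.
Proof.
pose G t := H (K - t)%N t.
transitivity (\sum_(s < K.+2) (c s * (2 * s%:R) * G s.-1)
              - \sum_(s < K.+2) (c s * (2 * (K.+1 - s)%:R) * G s)).
  rewrite -sumrB; apply: eq_bigr => -[[|s] hs] _ /=; rewrite /G.
    by rewrite !subn0 !(mulr0, mul0r); ring.
  by rewrite subSS subnS; ring.
rewrite [X in X - _]big_ord_recl [X in _ - X]big_ord_recr /=.
rewrite subnn !(mulr0, mul0r) add0r addr0 -sumrB.
by apply: eq_bigr => t _; rewrite /bump add1n add0n /G; ring.
Qed.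

Theorem lemma6p2 (R : realFieldType) (m n p q k : nat) (i : 'I_m) (j : 'I_n) :
  (1 <= m)%N -> (q <= n)%N -> (1 <= k)%N -> (k <= n - q)%N ->
  Lop i j (@fkpq R m n k p q) =
  (fun a S =>
     2 * k%:R * ((m%:R - 2 * n%:R) / 2 + p%:R + q%:R + k%:R - 1) *
     mulo_r (oi j false) (mulx i (@fkpq R m n (k - 1) p.+1 q.+1)) a S).
Proof.
move=> _ hq; case: k => [//|K] _ hK; rewrite subn1 /=.
have even_rhs : sp_even (mulx i (fkpq R (n := n) K p.+1 q.+1)).
  by apply: even_mulx; rewrite fkpq_monomials; apply: even_comb => t; apply: even_monomial.
rewrite mulo_r_even // !fkpq_monomials Lop_lin (mulx_lin _) (mulo_lin _).
apply: sp_ext => A S; under eq_bigr do rewrite Lop_monomial.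
rewrite (sum_lowering_reindex K (a_coef R m n K.+1 p q)
  (fun a s => mulo (oi j false) (mulx i (monomial R a s)) A S)) mulr_sumr; apply: eq_bigr => t _.
by rewrite a_coef_rec // [RHS]mulrA.
Qed.
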